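(* Fix $\alpha\ge0$. The boundary-tolerant cluster distance $d_C$ on isometry classes of $\alpha$-clusters of periodic point sets in $\mathbb R^n$ satisfies: (a) $d_C(\sigma,\xi)=0$ if and only if $\sigma=\xi$; (b) $d_C(\sigma,\xi)=d_C(\xi,\sigma)$ for all classes $\sigma,\xi$; (c) $d_C(\sigma,\zeta)\le d_C(\sigma,\xi)+d_C(\xi,\zeta)$ for all classes $\sigma,\xi,\zeta$.
   Context: A periodic point set is $S=M+\Lambda\subset\mathbb R^n$ with $\Lambda$ a lattice and $M$ a finite motif in a unit cell. For $p\in S$, the $\alpha$-cluster $C(S,p;\alpha)=S\cap\bar B(p;\alpha)$ has center $p$; its isometry class consists of all clusters obtained from it by isometries of $\mathbb R^n$ that map centers to centers. For finite $C,D\subset\mathbb R^n$, the directed Hausdorff distance is $d_H(C,D)=\max_{p\in C}\min_{q\in D}|p-q|$, and $d_R(C,D)=\min_{f\in\mathrm O(\mathbb R^n)}d_H(f(C),D)$. For periodic sets $S,Q$ and classes $\sigma,\xi$ represented by $C(S,p;\alpha)$, $C(Q,q;\alpha)$, $d_C(\sigma,\xi)$ is the minimum $\varepsilon\in[0,\alpha]$ such that $d_R(C(S,p;\alpha-\varepsilon)-p,\,C(Q,q;\alpha)-q)\le\varepsilon$ and $d_R(C(Q,q;\alpha-\varepsilon)-q,\,C(S,p;\alpha)-p)\le\varepsilon$, where $C-p$ denotes translation by $-p$.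
   Formalization: $d_C(\sigma,\xi)$ is the minimum admissible ε∈[0,α] only where that minimum exists, with no claim that it always does; (b) equates the two minima whenever either exists, and (c) holds only when all three minima exist. Apart from conventions, each condition added here is assumed in the paper as well or is needed for the statement above to hold. *)

From HB Require Import structures.
From mathcomp Require Import all_boot all_order all_algebra.
From mathcomp Require Import boolp classical_sets reals.
Set Implicit Arguments. Unset Strict Implicit. Unset Printing Implicit Defensive.
Import Order.TTheory GRing.Theory Num.Theory.
Local Open Scope ring_scope.
Local Open Scope classical_set_scope.

Section PeriodicClusters.
Variables (R : realType) (n : nat).
Notation pt := 'rV[R]_n.

Definition enorm (x : pt) : R := Num.sqrt (\sum_(i < n) x ord0 i ^+ 2).

Definition lattice (B : 'M[R]_n) : set pt :=
  [set x | exists k : 'rV[int]_n, x = map_mx (fun z : int => z%:~R) k *m B].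

(* Periodic point set S = M + Lambda, M a finite motif in the unit cell
   { t B | t in [0,1)^n } of a lattice Lambda with basis B. *)
Definition periodic_set (S : set pt) : Prop :=
  exists (B : 'M[R]_n) (M : seq pt),
    B \in unitmx /\
    (forall m, m \in M -> exists t : pt, (forall i, 0 <= t ord0 i < 1) /\ m = t *m B) /\
    S = [set x | exists m l, m \in M /\ lattice B l /\ x = m + l].

Definition cluster (S : set pt) (p : pt) (r : R) : set pt :=
  [set x | S x /\ enorm (x - p) <= r].

Definition centered (S : set pt) (p : pt) (r : R) : set pt :=
  [set x - p | x in cluster S p r].

(* directed Hausdorff distance max_{c in C} min_{d in D} |c - d|
   (for finite nonempty sets max = sup, min = inf) *)
Definition dH (C D : set pt) : R :=
  sup [set inf [set enorm (c - d) | d in D] | c in C].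

(* orthogonal group O(R^n), acting on row vectors by x |-> x A *)
Definition orthomx (A : 'M[R]_n) : Prop := A *m A^T = 1%:M.

(* d_R(C,D) = min_{f in O(R^n)} d_H(f(C), D)  (the min exists; inf = min) *)
Definition dR (C D : set pt) : R :=
  inf [set dH [set x *m A | x in C] D | A in orthomx].

Definition isometry (g : pt -> pt) : Prop :=
  forall x y, enorm (g x - g y) = enorm (x - y).

(* the classes of C(S,p;alpha) and C(Q,q;alpha) coincide *)
Definition same_class (alpha : R) (S : set pt) (p : pt) (Q : set pt) (q : pt) : Prop :=
  exists g : pt -> pt, isometry g /\ g p = q /\ g @` cluster S p alpha = cluster Q q alpha.

Definition dC_set (alpha : R) (S : set pt) (p : pt) (Q : set pt) (q : pt) : set R :=
  [set e | 0 <= e <= alpha /\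
     dR (centered S p (alpha - e)) (centered Q q alpha) <= e /\
     dR (centered Q q (alpha - e)) (centered S p alpha) <= e].

(* "d_C(class of (S,p), class of (Q,q)) = d": d is the minimum of dC_set *)
Definition is_dC (alpha : R) (S : set pt) (p : pt) (Q : set pt) (q : pt) (d : R) : Prop :=
  dC_set alpha S p Q q d /\ (forall e, dC_set alpha S p Q q e -> d <= e).

End PeriodicClusters.

(* A periodic point set meets every ball in finitely many points, so its clusters are
   finite, and this drives (a) and (c); (b) holds because the definition of d_C is symmetric.

   (a) If d_R vanishes both ways between two centered clusters, rotations bring one
   arbitrarily close to the other.  The distances within the two finite clusters take
   finitely many values, so a close enough rotation induces a matching that preserves
   all distances exactly.  It fixes 0, hence preserves inner products, hence extends to
   an orthogonal map (a product of Householder reflections).  Two such injections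
   between finite sets are bijections, so the clusters are congruent.

   (c) Composing near-optimal rotations for b and c moves each point of the
   (alpha - b - c)-cluster of S within b + h of a point of Q of norm below
   alpha - c + h.  Since the norms of points of Q's clusters take finitely many values,
   for small h that point lies in the (alpha - c)-cluster of Q, and then within c + h
   of a point of Z.  Letting h go to 0 shows that b + c is admissible for (S, Z). *)

From HB Require Import structures.
From mathcomp Require Import all_boot all_order all_algebra.
From mathcomp Require Import boolp classical_sets cardinality reals.
From mathcomp Require Import ring lra zify.
Import Order.TTheory GRing.Theory Num.Theory.
Local Open Scope ring_scope.
Local Open Scope classical_set_scope.

Set Implicit Arguments. Unset Strict Implicit. Unset Printing Implicit Defensive.

Section DotProduct.
Variables (R : realDomainType) (n : nat).
Implicit Types (u v w : 'rV[R]_n).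

Definition dot u v : R := \sum_i u ord0 i * v ord0 i.

Lemma dotE u v : dot u v = (u *m v^T) ord0 ord0.
Proof. by rewrite mxE; apply: eq_bigr => i _; rewrite mxE. Qed.

Lemma dotC u v : dot u v = dot v u.
Proof. by apply: eq_bigr => i _; rewrite mulrC. Qed.

Lemma dotDl u v w : dot (u + v) w = dot u w + dot v w.
Proof. by rewrite -big_split; apply: eq_bigr => i _; rewrite mxE mulrDl. Qed.

Lemma dotZl a u v : dot (a *: u) v = a * dot u v.
Proof. by rewrite mulr_sumr; apply: eq_bigr => i _; rewrite mxE mulrA. Qed.

Lemma dotNl u v : dot (- u) v = - dot u v.
Proof. by rewrite -scaleN1r dotZl mulN1r. Qed.

Lemma dotBl u v w : dot (u - v) w = dot u w - dot v w.
Proof. by rewrite dotDl dotNl. Qed.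

Lemma dotBr u v w : dot w (u - v) = dot w u - dot w v.
Proof. by rewrite dotC dotBl !(dotC w). Qed.

Lemma dotZr a u v : dot u (a *: v) = a * dot u v.
Proof. by rewrite dotC dotZl dotC. Qed.

Lemma dot_ge0 u : 0 <= dot u u.
Proof. by apply: sumr_ge0 => i _; rewrite -expr2 sqr_ge0. Qed.

Lemma dot_eq0 u : (dot u u == 0) = (u == 0).
Proof.
apply/idP/eqP => [|->]; last by rewrite /dot big1 // => i _; rewrite mxE mul0r.
rewrite psumr_eq0 => [/allP u0|i _]; last by rewrite -expr2 sqr_ge0.
apply/rowP => i; have := u0 i (mem_index_enum i).
by rewrite mulf_eq0 orbb mxE => /eqP.
Qed.

Lemma dotDD u v : dot (u + v) (u + v) = dot u u + dot v v + 2 * dot u v.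
Proof. by rewrite !dotDl !(dotC _ (u + v)) !dotDl (dotC v u); ring. Qed.

Lemma dotBB u v : dot (u - v) (u - v) = dot u u + dot v v - 2 * dot u v.
Proof. by rewrite !dotBl !dotBr (dotC v u); ring. Qed.

End DotProduct.

Section EuclideanNorm.
Variables (R : realType) (n : nat).
Implicit Types (u v w : 'rV[R]_n).

Lemma enormE u : enorm u = Num.sqrt (dot u u).
Proof. by congr Num.sqrt; apply: eq_bigr => i _; rewrite expr2. Qed.

Lemma enorm_ge0 u : 0 <= enorm u.
Proof. by rewrite enormE sqrtr_ge0. Qed.

Lemma enorm_sqr u : enorm u ^+ 2 = dot u u.
Proof. by rewrite enormE sqr_sqrtr // dot_ge0. Qed.

Lemma enorm_eq0 u : (enorm u == 0) = (u == 0).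
Proof. by rewrite enormE sqrtr_eq0 le_eqVlt ltNge dot_ge0 orbF dot_eq0. Qed.

Lemma enorm0 : enorm (0 : 'rV[R]_n) = 0.
Proof. by apply/eqP; rewrite enorm_eq0. Qed.

Lemma enormN u : enorm (- u) = enorm u.
Proof. by rewrite !enormE dotNl dotC dotNl opprK. Qed.

Lemma enorm_distC u v : enorm (u - v) = enorm (v - u).
Proof. by rewrite -enormN opprB. Qed.

(* With [a = |u|] and [b = |v|], [|b u - a v|^2 = 2 a b (a b - <u, v>)]. *)
Lemma dot_le_enormM u v : dot u v <= enorm u * enorm v.
Proof.
have [->|u0] := eqVneq u 0; first by rewrite enorm0 mul0r -(scale0r 0) dotZl mul0r.
have [->|v0] := eqVneq v 0; first by rewrite enorm0 mulr0 -(scale0r 0) dotZr mul0r.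
have ab0 : 0 < enorm u * enorm v by rewrite mulr_gt0 // lt_def enorm_ge0 enorm_eq0 ?u0 ?v0.
have := dot_ge0 (enorm v *: u - enorm u *: v).
rewrite dotBB !dotZl !dotZr -!enorm_sqr; move: ab0.
move: (enorm u) (enorm v) (dot u v) => a b d ab0 h.
have : 0 <= (a * b) * (a * b - d) *+ 2 by move: h; congr (_ <= _); ring.
by rewrite pmulrn_lge0 // pmulr_rge0 // subr_ge0.
Qed.

Lemma ler_enormD u v : enorm (u + v) <= enorm u + enorm v.
Proof.
rewrite -ler_sqr ?nnegrE ?addr_ge0 ?enorm_ge0 // sqrrD !enorm_sqr dotDD.
have := dot_le_enormM u v.
by move: (enorm u) (enorm v) (dot u u) (dot v v) (dot u v) => a b x y d; lra.
Qed.

Lemma ler_enormB u v : enorm (u - v) <= enorm u + enorm v.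
Proof. by rewrite -(enormN v) ler_enormD. Qed.

Lemma ler_enorm_distD u v w : enorm (u - w) <= enorm (u - v) + enorm (v - w).
Proof. by have := ler_enormD (u - v) (v - w); rewrite addrA subrK. Qed.

Lemma ler_dist_enorm u v : `|enorm u - enorm v| <= enorm (u - v).
Proof.
rewrite ler_norml; apply/andP; split.
  by have := ler_enorm_distD v u 0; rewrite !subr0 enorm_distC; lra.
by have := ler_enorm_distD u v 0; rewrite !subr0; lra.
Qed.

Lemma ler_coord_enorm u i : `|u ord0 i| <= enorm u.
Proof.
rewrite /enorm -sqrtr_sqr ler_sqrt ?sumr_ge0 // => [|j _]; last exact: sqr_ge0.
by rewrite (bigD1 i) //= lerDl sumr_ge0 // => j _; exact: sqr_ge0.
Qed.

Lemma dot_polarization u v u' v' :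
  enorm (u' - v') = enorm (u - v) -> enorm u' = enorm u -> enorm v' = enorm v ->
  dot u' v' = dot u v.
Proof.
move=> e e1 e2; have : dot (u' - v') (u' - v') = dot (u - v) (u - v).
  by rewrite -!enorm_sqr e.
have two_neq0 : 2 != 0 :> R by rewrite pnatr_eq0.
by rewrite !dotBB -!enorm_sqr e1 e2 => /addrI/oppr_inj/(mulfI two_neq0).
Qed.

End EuclideanNorm.

Section OrthogonalMatrices.
Variables (R : realType) (n : nat).
Implicit Types (u v x y : 'rV[R]_n) (A B : 'M[R]_n).

Lemma orthomx_dot A u v : orthomx A -> dot (u *m A) (v *m A) = dot u v.
Proof. by move=> oA; rewrite !dotE trmx_mul mulmxA -(mulmxA u) oA mulmx1. Qed.

Lemma orthomx_enorm A u : orthomx A -> enorm (u *m A) = enorm u.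
Proof. by move=> oA; rewrite !enormE orthomx_dot. Qed.

Lemma orthomx1 : orthomx (1%:M : 'M[R]_n).
Proof. by rewrite /orthomx trmx1 mulmx1. Qed.

Lemma orthomxM A B : orthomx A -> orthomx B -> orthomx (A *m B).
Proof. by move=> oA oB; rewrite /orthomx trmx_mul mulmxA -(mulmxA A) oB mulmx1. Qed.

Lemma orthomxT A : orthomx A -> orthomx A^T.
Proof. by move=> oA; rewrite /orthomx trmxK; apply: mulmx1C. Qed.

Lemma orthomx_inj A : orthomx A -> injective (mulmx^~ A : 'rV[R]_n -> 'rV[R]_n).
Proof. by move=> oA u v e; rewrite -(mulmx1 u) -(mulmx1 v) -oA !mulmxA e. Qed.

Lemma orthomxKV A u : orthomx A -> u *m A *m A^T = u.
Proof. by move=> oA; rewrite -mulmxA oA mulmx1. Qed.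

(* The Householder reflection in the hyperplane orthogonal to [x - y]. *)
Lemma orthomx_reflection x y : dot x x = dot y y ->
  exists2 A, orthomx A & x *m A = y /\ forall v, dot v x = dot v y -> v *m A = v.
Proof.
move=> xy; set w := x - y.
have [w0|w0] := eqVneq (dot w w) 0.
  move: w0 => /eqP; rewrite dot_eq0 subr_eq0 => /eqP <-.
  by exists 1%:M; [exact: orthomx1 | split=> [|v _]; rewrite mulmx1].
set c := 2 / dot w w; set W := w^T *m w.
have Av v : v *m (1%:M - c *: W) = v - (c * dot v w) *: w.
  by rewrite mulmxBr mulmx1 -scalemxAr mulmxA [v *m w^T]mx11_scalar -dotE mul_scalar_mx scalerA.
have dww : dot w w = 2 * (dot x x - dot x y) by rewrite dotBB xy; ring.
exists (1%:M - c *: W); last split.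
- have WT : W^T = W by rewrite trmx_mul trmxK.
  have WW : W *m W = dot w w *: W.
    by rewrite mulmxA -(mulmxA w^T) [w *m w^T]mx11_scalar -dotE mul_mx_scalar scalemxAl.
  rewrite /orthomx (_ : (1%:M - c *: W)^T = 1%:M - c *: W); last first.
    by rewrite linearB linearZ /= trmx1 WT.
  rewrite mulmxBl mulmxBr mulmxBr mul1mx mulmx1 mul1mx.
  rewrite -!scalemxAl -!scalemxAr WW !scalerA.
  have -> : c * c * dot w w = c + c by rewrite /c; field; rewrite -?dww.
  by rewrite scalerDl opprB addrK subrK.
- have cxw : c * dot x w = 1.
    by move: w0; rewrite /c dww (dotBr x y x) mulf_eq0 negb_or => /andP[_ ?]; field.
  by rewrite Av cxw scale1r opprB addrC subrK.
- by move=> v vxy; rewrite Av dotBr vxy subrr mulr0 scale0r subr0.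
Qed.

Lemma orthomx_extend (s : seq 'rV[R]_n) (h : 'rV[R]_n -> 'rV[R]_n) :
  {in s &, forall u v, dot (h u) (h v) = dot u v} ->
  exists2 A, orthomx A & {in s, forall u, u *m A = h u}.
Proof.
elim: s => [|u s IHs] hdot; first by exists 1%:M => //; exact: orthomx1.
have [|A oA hA] := IHs; first by move=> v w vs ws; apply: hdot; rewrite inE ?vs ?ws orbT.
have uu : dot (u *m A) (u *m A) = dot (h u) (h u).
  by rewrite orthomx_dot // hdot // mem_head.
have [H oH [Hu Hs]] := orthomx_reflection uu.
exists (A *m H); first exact: orthomxM.
move=> v; rewrite inE => /predU1P[->|vs]; first by rewrite mulmxA Hu.
rewrite mulmxA hA // Hs // -(hA v vs) orthomx_dot // (hA v vs) hdot ?mem_head //.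
by rewrite inE vs orbT.
Qed.

End OrthogonalMatrices.

Section HausdorffDistance.
Variables (R : realType) (n : nat).
Implicit Types (C D : set 'rV[R]_n) (A : 'M[R]_n).

Lemma inf_ge0 (E : set R) : (forall x, E x -> 0 <= x) -> 0 <= inf E.
Proof.
move=> E0; have [[x Ex]|nE] := pselect (E !=set0); first by apply: lb_le_inf; first by exists x.
by rewrite (_ : E = set0) ?inf0 //; apply/seteqP; split=> // x Ex; apply: nE; exists x.
Qed.

Lemma sup_ge0 (E : set R) : (forall x, E x -> 0 <= x) -> 0 <= sup E.
Proof.
move=> E0; have [[[x Ex] ubE]|nE] := pselect (has_sup E); last by rewrite sup_out.
exact: le_trans (E0 x Ex) (ub_le_sup ubE Ex).
Qed.

Lemma dH_ge0 C D : 0 <= dH C D.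
Proof. by apply: sup_ge0 => _ [c _ <-]; apply: inf_ge0 => _ [d _ <-]; apply: enorm_ge0. Qed.

Lemma dH_le C D t : C !=set0 ->
  (forall c, C c -> exists2 d, D d & enorm (c - d) <= t) -> dH C D <= t.
Proof.
move=> [c0 Cc0] CD; apply: ge_sup => [|_ [c Cc <-]].
  by exists (inf [set enorm (c0 - d) | d in D]), c0.
have [d Dd cd] := CD c Cc; apply: le_trans cd; apply: ge_inf; last by exists d.
by exists 0 => _ [? _ <-]; apply: enorm_ge0.
Qed.

Lemma dR_le_dH C D A : orthomx A -> dR C D <= dH [set c *m A | c in C] D.
Proof. by move=> oA; apply: ge_inf; [exists 0 => _ [B _ <-]; apply: dH_ge0 | exists A]. Qed.

Lemma dR_image_le0 C A : orthomx A -> C !=set0 -> dR C [set c *m A | c in C] <= 0.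
Proof.
move=> oA [c0 Cc0]; apply: le_trans (dR_le_dH _ _ oA) _.
apply: dH_le => [|_ [c Cc <-]]; first by exists (c0 *m A), c0.
by exists (c *m A); [exists c | rewrite subrr enorm0].
Qed.

Lemma image_orthomxK C A : orthomx A -> [set d *m A^T | d in [set c *m A | c in C]] = C.
Proof.
move=> oA; apply/seteqP; split => [_ [_ [c Cc <-] <-]|c Cc]; first by rewrite orthomxKV.
by exists (c *m A); [exists c | rewrite orthomxKV].
Qed.

Lemma dR_lt_approx C D r t : (forall c, C c -> enorm c <= r) -> D 0 -> dR C D < t ->
  exists2 A, orthomx A & forall c, C c -> exists2 d, D d & enorm (c *m A - d) < t.
Proof.
move=> Cr D0 /inf_lt[].
  by exists (dH [set c *m 1%:M | c in C] D), 1%:M; first exact: orthomx1.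
move=> _ [A oA <-] CAD; exists A => // c Cc.
have CA_bounded : has_ubound [set inf [set enorm (c' - d) | d in D] | c' in [set c *m A | c in C]].
  exists r => _ [_ [c' Cc' <-] <-].
  apply: le_trans (_ : _ <= enorm (c' *m A - 0)) _; last by rewrite subr0 orthomx_enorm ?Cr.
  by apply: ge_inf; [exists 0 => _ [? _ <-]; apply: enorm_ge0 | exists 0].
have /inf_lt[|_ [d Dd <-] cd] : inf [set enorm (c *m A - d) | d in D] < t.
- by apply: le_lt_trans CAD; apply: (ub_le_sup CA_bounded); exists (c *m A) => //; exists c.
- by exists (enorm (c *m A - 0)), 0.
- by exists d.
Qed.

End HausdorffDistance.

Section LocalFiniteness.
Variables (R : realType) (n : nat).
Implicit Types (S : set 'rV[R]_n) (p u : 'rV[R]_n) (M : 'M[R]_n).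

Lemma int_box_finite (N : nat) :
  finite_set [set k : 'rV[int]_n | forall i, `|k ord0 i| <= N%:Z].
Proof.
(* Indices [0 : 'I_1] rather than [ord0], so that [lia] sees the same atoms as [rowP]. *)
pose row_of (f : {ffun 'I_n -> 'I_(N + N).+1}) : 'rV[int]_n := \row_i ((f i : nat)%:Z - N%:Z).
apply: (sub_finite_set _ (finite_image row_of (finite_finset (X := setT)))) => k kN.
exists [ffun i => inord (absz (k 0 i + N%:Z))] => //.
apply/rowP => i; have kNi : `|k 0 i| <= N%:Z := kN i.
by rewrite !mxE ffunE inordK; lia.
Qed.

Lemma ler_coord_mulmx u M i :
  `|(u *m M) ord0 i| <= enorm u * \sum_j \sum_k `|M j k|.
Proof.
rewrite mxE mulr_sumr; apply: le_trans (ler_norm_sum _ _ _) _; apply: ler_sum => j _.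
rewrite normrM ler_pM ?normr_ge0 ?ler_coord_enorm //.
by rewrite (bigD1 i) //= lerDl sumr_ge0.
Qed.

Lemma lattice_ball_finite M K : M \in unitmx ->
  finite_set [set l | lattice M l /\ enorm l <= K].
Proof.
move=> Munit; set T := \sum_j \sum_k `|invmx M j k|; set N := (Num.truncn (K * T)).+1.
have : finite_set [set map_mx intr k *m M | k in [set k : 'rV[int]_n | forall i, `|k ord0 i| <= N%:Z]].
  exact/finite_image/int_box_finite.
apply: sub_finite_set => _ [[k ->] kK]; exists k => //= i.
rewrite -(ler_int R) intr_norm; apply/ltW/(le_lt_trans _ (truncnS_gt _)).
have -> : (k ord0 i)%:~R = (map_mx intr k *m M *m invmx M) ord0 i by rewrite mulmxK // mxE.
apply: le_trans (ler_coord_mulmx _ _ _) _; apply: ler_wpM2r kK.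
by do 2!apply: sumr_ge0 => ? _.
Qed.

Lemma cluster_finite S p r : periodic_set S -> finite_set (cluster S p r).
Proof.
move=> [M [s [Munit [_ ->]]]].
have : finite_set (\bigcup_(m in [set` s])
    (+%R m) @` [set l | lattice M l /\ enorm l <= r + enorm (m - p)]).
  by apply: bigcup_finite => // m _; apply/finite_image/lattice_ball_finite.
apply: sub_finite_set.
move=> _ [[m [l [ms [Ml ->]]]] mlp]; exists m => //; exists l => //; split => //.
have -> : l = (m + l - p) - (m - p) by rewrite opprB addrA subrK addrC addKr.
by apply: le_trans (ler_enormB _ _) _; rewrite lerD2r.
Qed.

Lemma centeredE S p r : centered S p r = [set c | S (c + p) /\ enorm c <= r].
Proof.
apply/seteqP; split => [_ [x [Sx xp] <-]|c [Sc cr]]; first by rewrite /= subrK.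
by exists (c + p); [split; rewrite ?addrK | rewrite addrK].
Qed.

Lemma centered_finite S p r : periodic_set S -> finite_set (centered S p r).
Proof. by move=> /(cluster_finite p r); apply: finite_image. Qed.

End LocalFiniteness.

Section FiniteGaps.
Variable R : realType.
Implicit Types E : set R.

Lemma finite_gap E t : finite_set E ->
  exists2 e, 0 < e & forall x, E x -> x < t + e -> x <= t.
Proof.
move=> /finite_seqP[s ->]; elim: s => [|a s [e e0 se]]; first by exists 1.
have [at_|ta] := leP a t.
  by exists e => // x /predU1P[->|/se] //.
exists (Num.min e (a - t)); first by rewrite lt_min e0 subr_gt0.
move=> x /predU1P[->|xs xe]; first by rewrite -ltrBlDl lt_min ltxx andbF.
by apply: se xs _; apply: lt_le_trans xe _; rewrite lerD2l ge_min lexx.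
Qed.

Lemma finite_separated E : finite_set E ->
  exists2 e, 0 < e & forall a b, E a -> E b -> `|a - b| < e -> a = b.
Proof.
move=> finE; have [|e e0 gap] := @finite_gap [set `|ab.1 - ab.2| | ab in E `*` E] 0.
  exact/finite_image/finite_setX.
exists e => // a b Ea Eb ab.
have : `|a - b| <= 0 by apply: gap; [exists (a, b) | rewrite add0r].
by rewrite normr_le0 subr_eq0 => /eqP.
Qed.

End FiniteGaps.

Lemma finite_inj_image_eq (T : eqType) (C D : set T) (f g : T -> T) :
  finite_set C -> finite_set D -> injective f -> injective g ->
  (forall c, C c -> D (f c)) -> (forall d, D d -> C (g d)) -> f @` C = D.
Proof.
have uniq_enum (A : set T) : finite_set A -> exists2 s, uniq s & A = [set` s].
  move=> /finite_seqP[s ->]; exists (undup s); first exact: undup_uniq.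
  by apply/seteqP; split => x /=; rewrite mem_undup.
move=> /uniq_enum[sC uC ->] /uniq_enum[sD uD ->] finj ginj fCD gDC.
have fsC : {subset map f sC <= sD} by move=> _ /mapP[c cs ->]; apply: fCD.
have gsD : {subset map g sD <= sC} by move=> _ /mapP[d ds ->]; apply: gDC.
have szDC : (size sD <= size (map f sC))%N.
  by rewrite size_map -(size_map g sD); apply: uniq_leq_size gsD; rewrite map_inj_uniq.
have ufC : uniq (map f sC) by rewrite map_inj_uniq.
have [_ fCE] := uniq_min_size ufC fsC szDC.
apply/seteqP; split => [_ [c cs <-]|d]; first exact: fCD.
by rewrite /= -fCE => /mapP[c cs ->]; exists c.
Qed.

Section Rigidity.
Variables (R : realType) (n : nat).
Implicit Types (C D : set 'rV[R]_n).

Lemma dR_le0_rigid C D r : finite_set C -> finite_set D ->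
  (forall c, C c -> enorm c <= r) -> C 0 -> D 0 -> dR C D <= 0 ->
  exists2 A, orthomx A & forall c, C c -> D (c *m A).
Proof.
move=> finC finD Cr C0 D0 dR0; set CD := C `|` D.
have [|e e0 sep] := @finite_separated R [set enorm (uv.1 - uv.2) | uv in CD `*` CD].
  by apply/finite_image/finite_setX; rewrite finite_setU.
have dist_eq u v u' v' : CD u -> CD v -> CD u' -> CD v' ->
    `|enorm (u - v) - enorm (u' - v')| < e -> enorm (u - v) = enorm (u' - v').
  by move=> Cu Cv Cu' Cv' uv; apply: sep uv; [exists (u, v) | exists (u', v')].
have e20 : 0 < e / 2 by rewrite divr_gt0.
have [A oA CAD] := dR_lt_approx Cr D0 (le_lt_trans dR0 e20).
have /choice[phi phiP] : forall c, exists d, C c -> D d /\ enorm (c *m A - d) < e / 2.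
  by move=> c; have [/CAD[d Dd cd]|] := pselect (C c); [exists d | exists 0].
have phi_dist u v : C u -> C v -> enorm (phi u - phi v) = enorm (u - v).
  move=> Cu Cv; have [Du ue] := phiP u Cu; have [Dv ve] := phiP v Cv.
  apply: dist_eq; [by right | by right | by left | by left |].
  rewrite -(orthomx_enorm (u - v) oA) mulmxBl; apply: le_lt_trans (ler_dist_enorm _ _) _.
  have -> : phi u - phi v - (u *m A - v *m A) = (phi u - u *m A) - (phi v - v *m A).
    by rewrite !opprD !opprK addrACA.
  by apply: le_lt_trans (ler_enormB _ _) _; rewrite !(enorm_distC (phi _)); lra.
have phi0 : phi 0 = 0.
  have [D0' small] := phiP 0 C0; rewrite mul0mx sub0r enormN in small.
  have : enorm (phi 0 - 0) = enorm (0 - 0 : 'rV[R]_n).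
    apply: dist_eq; [by right | by right | by right | by right |].
    by rewrite !subr0 enorm0 subr0 ger0_norm ?enorm_ge0 //; lra.
  by rewrite !subr0 enorm0 => /eqP; rewrite enorm_eq0 => /eqP.
have phi_norm u : C u -> enorm (phi u) = enorm u.
  by move=> Cu; rewrite -[phi u]subr0 -phi0 phi_dist // subr0.
have /finite_seqP[s Cs] := finC.
have [u v us vs|B oB phiB] := @orthomx_extend R n s phi.
  by rewrite Cs in phi_dist phi_norm; apply: dot_polarization; rewrite ?phi_dist ?phi_norm.
by exists B => // c Cc; rewrite phiB; [case: (phiP c Cc) | move: Cc; rewrite Cs].
Qed.

End Rigidity.

Section Clusters.
Variables (R : realType) (n : nat).
Implicit Types (S : set 'rV[R]_n) (p c : 'rV[R]_n).

Lemma centered0 S p r : S p -> 0 <= r -> centered S p r 0.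
Proof. by move=> Sp r0; rewrite centeredE /= add0r enorm0. Qed.

Lemma centered_le S p r c : centered S p r c -> enorm c <= r.
Proof. by rewrite centeredE => -[]. Qed.

Lemma centered_gap S p r : periodic_set S ->
  exists2 e, 0 < e & forall h, h < e -> centered S p (r + h) `<=` centered S p r.
Proof.
move=> pS; have [|e e0 gap] := @finite_gap R [set enorm c | c in centered S p (r + 1)] r.
  exact/finite_image/centered_finite.
exists (Num.min 1 e) => [|h]; first by rewrite lt_min ltr01 e0.
rewrite lt_min => /andP[h1 he] c; rewrite !centeredE => -[Sc ch]; split => //.
apply: gap; last by apply: le_lt_trans ch _; rewrite ltrD2l.
by exists c => //; rewrite centeredE; split => //; apply: le_trans ch _; rewrite lerD2l ltW.
Qed.

End Clusters.

Section Congruence.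
Variables (R : realType) (n : nat).
Implicit Types (C D S Q : set 'rV[R]_n) (p q : 'rV[R]_n).

Lemma dR_le0_congruentP C D r : finite_set C -> finite_set D ->
  (forall c, C c -> enorm c <= r) -> (forall d, D d -> enorm d <= r) -> C 0 -> D 0 ->
  dR C D <= 0 /\ dR D C <= 0 <-> exists2 A, orthomx A & [set c *m A | c in C] = D.
Proof.
move=> finC finD Cr Dr C0 D0; split => [[CD DC]|[A oA <-]].
  have [A oA CAD] := dR_le0_rigid finC finD Cr C0 D0 CD.
  have [B oB DBC] := dR_le0_rigid finD finC Dr D0 C0 DC.
  by exists A => //; apply: finite_inj_image_eq (orthomx_inj oA) (orthomx_inj oB) CAD DBC.
split; first by apply: dR_image_le0; last by exists 0.
rewrite -[X in dR _ X](image_orthomxK C oA); apply: dR_image_le0; first exact: orthomxT.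
by exists (0 *m A), 0.
Qed.

Lemma same_classP alpha S p Q q : periodic_set S ->
  same_class alpha S p Q q <->
  exists2 A, orthomx A & [set c *m A | c in centered S p alpha] = centered Q q alpha.
Proof.
move=> pS; split => [[g [g_iso [gp gS]]]|[A oA SAQ]].
  pose h c := g (c + p) - q.
  have h_dist u v : enorm (h u - h v) = enorm (u - v).
    by rewrite /h opprB addrA subrK g_iso opprD addrACA subrr addr0.
  have h0 : h 0 = 0 by rewrite /h add0r gp subrr.
  have h_norm u : enorm (h u) = enorm u by rewrite -[h u]subr0 -h0 h_dist subr0.
  have /finite_seqP[s Ss] := centered_finite p alpha pS.
  have [u v _ _|A oA hA] := @orthomx_extend R n s h.
    exact: dot_polarization (h_dist u v) (h_norm u) (h_norm v).
  exists A => //; apply/seteqP; split => [_ [c Sc <-]|d [y Qy <-]].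
    have cs : c \in s by move: Sc; rewrite Ss.
    rewrite hA //; case: Sc => x Sx <-.
    by exists (g x); [rewrite -gS; exists x | rewrite /h subrK].
  move: Qy; rewrite -gS => -[x Sx gx].
  have Sxp : centered S p alpha (x - p) by exists x.
  exists (x - p) => //; rewrite hA; first by rewrite /h subrK gx.
  by move: Sxp; rewrite Ss.
exists (fun x => (x - p) *m A + q); split; [|split].
- move=> x y; rewrite opprD addrACA subrr addr0 -mulmxBl orthomx_enorm //.
  by rewrite opprB addrA subrK.
- by rewrite subrr mul0mx add0r.
apply/seteqP; split => [_ [x Sx <-]|y Qy].
  have : centered Q q alpha ((x - p) *m A) by rewrite -SAQ; exists (x - p) => //; exists x.
  by case=> y Qy yx; rewrite -yx subrK.
have : centered Q q alpha (y - q) by exists y.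
rewrite -SAQ => -[_ [x Sx <-] xy]; exists x => //.
by rewrite xy subrK.
Qed.

Lemma is_dC0 alpha S p Q q : 0 <= alpha ->
  is_dC alpha S p Q q 0 <->
  dR (centered S p alpha) (centered Q q alpha) <= 0 /\
  dR (centered Q q alpha) (centered S p alpha) <= 0.
Proof.
move=> alpha0; rewrite /is_dC /dC_set /= subr0 lexx alpha0.
by split => [[[_ DR] _] //|DR]; split => // e [/andP[]].
Qed.

Lemma is_dC0_same_class alpha S p Q q : 0 <= alpha ->
  periodic_set S -> S p -> periodic_set Q -> Q q ->
  is_dC alpha S p Q q 0 <-> same_class alpha S p Q q.
Proof.
move=> alpha0 pS Sp pQ Qq; rewrite is_dC0 // same_classP //.
apply: (dR_le0_congruentP (r := alpha)); try by [apply: centered_finite | apply: centered0].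
  by move=> c /centered_le.
by move=> d /centered_le.
Qed.

End Congruence.

Section Metric.
Variables (R : realType) (n : nat).
Implicit Types (S Q X Y W Z : set 'rV[R]_n) (p q x y w z : 'rV[R]_n).

Lemma dC_setC alpha S p Q q : dC_set alpha S p Q q = dC_set alpha Q q S p.
Proof. by apply/seteqP; split => e [? [? ?]]. Qed.

Lemma is_dC_sym alpha S p Q q d : is_dC alpha S p Q q d <-> is_dC alpha Q q S p d.
Proof. by rewrite /is_dC dC_setC. Qed.

Lemma dR_centered_compose X Y W x y w alpha b c h :
  X x -> Y y -> W w -> 0 <= b -> 0 <= c -> b + c <= alpha -> 0 < h ->
  centered Y y (alpha - c + h) `<=` centered Y y (alpha - c) ->
  dR (centered X x (alpha - b)) (centered Y y alpha) <= b ->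
  dR (centered Y y (alpha - c)) (centered W w alpha) <= c ->
  dR (centered X x (alpha - (b + c))) (centered W w alpha) <= b + c + (h + h).
Proof.
move=> Xx Yy Ww b0 c0 bca h_gt0 gapY XY YW.
have alpha0 : 0 <= alpha by apply: le_trans bca; rewrite addr_ge0.
have [A1 oA1 XA1] : exists2 A1, orthomx A1 & forall s, centered X x (alpha - b) s ->
    exists2 d, centered Y y alpha d & enorm (s *m A1 - d) < b + h.
  apply: (dR_lt_approx (r := alpha - b)) (centered0 Yy alpha0) _ => [s /centered_le //|].
  by apply: le_lt_trans XY _; rewrite ltrDl.
have [A2 oA2 YA2] : exists2 A2, orthomx A2 & forall d, centered Y y (alpha - c) d ->
    exists2 d', centered W w alpha d' & enorm (d *m A2 - d') < c + h.
  apply: (dR_lt_approx (r := alpha - c)) (centered0 Ww alpha0) _ => [d /centered_le //|].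
  by apply: le_lt_trans YW _; rewrite ltrDl.
apply: le_trans (dR_le_dH _ _ (orthomxM oA1 oA2)) _.
apply: dH_le => [|_ [s Xs <-]].
  by exists (0 *m (A1 *m A2)), 0 => //; apply: centered0; rewrite ?subr_ge0.
have s_le := centered_le Xs.
have [d1 Yd1 sd1] : exists2 d1, centered Y y alpha d1 & enorm (s *m A1 - d1) < b + h.
  by apply: XA1; move: Xs; rewrite !centeredE => -[Xs _]; split => //; lra.
have Yd1' : centered Y y (alpha - c) d1.
  apply: gapY; move: Yd1; rewrite !centeredE => -[Yd1 _]; split => //.
  have := ler_enorm_distD d1 (s *m A1) 0; rewrite !subr0 orthomx_enorm // enorm_distC; lra.
have [d2 Wd2 d1d2] := YA2 d1 Yd1'.
exists d2 => //; apply: le_trans (ler_enorm_distD _ (d1 *m A2) _) _.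
by rewrite mulmxA -mulmxBl orthomx_enorm //; lra.
Qed.

Lemma dR_centered_triangle X Y W x y w alpha b c :
  periodic_set Y -> X x -> Y y -> W w -> 0 <= b -> 0 <= c -> b + c <= alpha ->
  dR (centered X x (alpha - b)) (centered Y y alpha) <= b ->
  dR (centered Y y (alpha - c)) (centered W w alpha) <= c ->
  dR (centered X x (alpha - (b + c))) (centered W w alpha) <= b + c.
Proof.
move=> pY Xx Yy Ww b0 c0 bca XY YW.
have [e0 e0_gt0 gapY] := centered_gap y (alpha - c) pY.
apply/ler_addgt0Pr => e e_gt0.
have m_gt0 : 0 < Num.min e e0 by rewrite lt_min e_gt0 e0_gt0.
have h_lt : Num.min e e0 / 2 < e0.
  apply: (@lt_le_trans _ _ (Num.min e e0)); last by rewrite ge_min lexx orbT.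
  by rewrite ltr_pdivrMr // ltr_pMr // ltr1n.
apply: le_trans (dR_centered_compose Xx Yy Ww b0 c0 bca _ (gapY _ h_lt) XY YW) _.
  by rewrite divr_gt0.
by rewrite -splitr lerD2l ge_min lexx.
Qed.

Lemma dC_set_add alpha S Q Z p q z b c :
  periodic_set Q -> S p -> Q q -> Z z ->
  dC_set alpha S p Q q b -> dC_set alpha Q q Z z c -> b + c <= alpha ->
  dC_set alpha S p Z z (b + c).
Proof.
move=> pQ Sp Qq Zz [/andP[b0 _] [SQ QS]] [/andP[c0 _] [QZ ZQ]] bca.
split; first by rewrite addr_ge0.
split; first exact: dR_centered_triangle pQ Sp Qq Zz b0 c0 bca SQ QZ.
by rewrite (addrC b c); apply: dR_centered_triangle pQ Zz Qq Sp c0 b0 _ ZQ QS; rewrite addrC.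
Qed.

Lemma is_dC_triangle alpha S Q Z p q z a b c :
  periodic_set Q -> S p -> Q q -> Z z ->
  is_dC alpha S p Z z a -> is_dC alpha S p Q q b -> is_dC alpha Q q Z z c -> a <= b + c.
Proof.
move=> pQ Sp Qq Zz [[/andP[_ a_le] _] a_min] [SQb _] [QZc _].
have [bca|bca] := lerP (b + c) alpha.
  by apply: a_min; apply: dC_set_add pQ Sp Qq Zz SQb QZc bca.
exact: le_trans a_le (ltW bca).
Qed.

End Metric.

Theorem mainTheorem3 (R : realType) (n : nat) (alpha : R) (halpha : 0 <= alpha) :
  (* (a) *)
  (forall (S Q : set 'rV[R]_n) (p q : 'rV[R]_n),
      periodic_set S -> S p -> periodic_set Q -> Q q ->
      (is_dC alpha S p Q q 0 <-> same_class alpha S p Q q)) /\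
  (* (b) *)
  (forall (S Q : set 'rV[R]_n) (p q : 'rV[R]_n) (d : R),
      periodic_set S -> S p -> periodic_set Q -> Q q ->
      (is_dC alpha S p Q q d <-> is_dC alpha Q q S p d)) /\
  (* (c) *)
  (forall (S Q Z : set 'rV[R]_n) (p q z : 'rV[R]_n) (a b c : R),
      periodic_set S -> S p -> periodic_set Q -> Q q -> periodic_set Z -> Z z ->
      is_dC alpha S p Z z a -> is_dC alpha S p Q q b -> is_dC alpha Q q Z z c ->
      a <= b + c).
Proof.
split; first by move=> S Q p q pS Sp pQ Qq; exact: is_dC0_same_class halpha pS Sp pQ Qq.
split; first by move=> S Q p q d _ _ _ _; exact: is_dC_sym.
move=> S Q Z p q z a b c _ Sp pQ Qq _ Zz dSZ dSQ dQZ.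
exact: is_dC_triangle pQ Sp Qq Zz dSZ dSQ dQZ.
Qed.
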